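(* For every integer $n\ge1$ and every $f:\{0,1\}^n\times\{0,1\}^n\to\{0,1\}$, $$\log_2\chi^{\mathrm{geom}}(f)\;\le\; C^{\mathrm{comp}}(f)\;\le\; 2\lceil\log_2\chi^{\mathrm{geom}}(f)\rceil .$$ In particular $C^{\mathrm{comp}}(f)=\Theta(\log\chi^{\mathrm{geom}}(f))$ with absolute implied constants.
   Context: Order $\{0,1\}^n$ lexicographically (equivalently, by the integer with that binary representation). A geometric rectangle is a subset of $\{0,1\}^n\times\{0,1\}^n$ of the form $[a_1,a_2]\times[b_1,b_2]$, where $[a_1,a_2]=\{a: a_1\le a\le a_2\}$ is an interval in this order. It is $f$-monochromatic if $f$ is constant on it. $\chi^{\mathrm{geom}}(f)$ is the minimum number of nonempty $f$-monochromatic geometric rectangles in a partition of $\{0,1\}^n\times\{0,1\}^n$. For $x\in\{0,1\}^n$, $\theta_x(y)=1$ iff $y\ge x$. A comparison communication protocol is a rooted binary tree each of whose internal vertices $v$ is assigned to either Alice or Bob and labeled by a function $g_v:\{0,1\}^n\to\{0,1\}$ which is either some $\theta_{x_v}$ or the constant $0$ function, with outgoing edges labeled $0$ and $1$; leaves are labeled by outputs in $\{0,1\}$. On input $(a,b)$ one starts at the root and at each internal vertex $v$ follows the edge labeled $g_v(a)$ if $v$ is Alice's and $g_v(b)$ if $v$ is Bob's. The protocol computes $f$ if the leaf reached on every input is labeled $f(a,b)$. Its cost is its depth; $C^{\mathrm{comp}}(f)$ is the minimum cost of a comparison communication protocol computing $f$. *)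

From Stdlib Require Import Reals.
From mathcomp Require Import all_boot.

Set Implicit Arguments.
Unset Strict Implicit.
Unset Printing Implicit Defensive.

(* Inputs: {0,1}^n as n-tuples of booleans (first component = most significant). *)
Definition bits (n : nat) := n.-tuple bool.

Fixpoint lexle (s t : seq bool) : bool :=
  match s, t with
  | x :: s', y :: t' => (~~ x && y) || ((x == y) && lexle s' t')
  | _, _ => true
  end.

Definition ble n (a b : bits n) : bool := lexle (tval a) (tval b).

Definition geom_rect n (a1 a2 b1 b2 : bits n) : {set bits n * bits n} :=
  [set p | [&& ble a1 p.1, ble p.1 a2, ble b1 p.2 & ble p.2 b2]].

Definition is_geom_rect n (R : {set bits n * bits n}) : Prop :=
  exists a1 a2 b1 b2, R = geom_rect a1 a2 b1 b2.

Definition monochromatic n (f : bits n -> bits n -> bool)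
  (R : {set bits n * bits n}) : Prop :=
  exists c : bool, forall p, p \in R -> f p.1 p.2 = c.

(* A partition of {0,1}^n x {0,1}^n into nonempty f-monochromatic geometric
   rectangles (mathcomp's [partition] excludes the empty block). *)
Definition geom_mono_partition n (f : bits n -> bits n -> bool)
  (P : {set {set bits n * bits n}}) : Prop :=
  partition P [set: bits n * bits n] /\
  forall R, R \in P -> is_geom_rect R /\ monochromatic f R.

Definition is_chi_geom n (f : bits n -> bits n -> bool) (k : nat) : Prop :=
  (exists P, geom_mono_partition f P /\ #|P| = k) /\
  (forall P, geom_mono_partition f P -> k <= #|P|).

Inductive player := Alice | Bob.

Inductive query (n : nat) := QTheta of bits n | QZero.

Definition qeval n (q : query n) (y : bits n) : bool :=
  match q with
  | QTheta x => ble x y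
  | QZero => false
  end.

Inductive protocol (n : nat) :=
  | PLeaf of bool
  | PNode of player & query n & protocol n & protocol n.
  (* PNode p g t0 t1 : t0 is the child along edge 0, t1 along edge 1 *)

Fixpoint run n (t : protocol n) (a b : bits n) : bool :=
  match t with
  | PLeaf o => o
  | PNode p q t0 t1 =>
      let x := match p with Alice => a | Bob => b end in
      if qeval q x then run t1 a b else run t0 a b
  end.

Fixpoint depth n (t : protocol n) : nat :=
  match t with
  | PLeaf _ => 0
  | PNode _ _ t0 t1 => (maxn (depth t0) (depth t1)).+1
  end.

Definition computes n (t : protocol n) (f : bits n -> bits n -> bool) : Prop :=
  forall a b, run t a b = f a b.

Definition is_C_comp n (f : bits n -> bits n -> bool) (c : nat) : Prop :=
  (exists t, computes t f /\ depth t = c) /\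
  (forall t, computes t f -> c <= depth t).

Definition log2R (x : R) : R := Rdiv (ln x) (ln 2).

From Stdlib Require Import Reals Classical Lra Wf_nat.
From mathcomp Require Import all_boot zify.
Set Implicit Arguments.
Unset Strict Implicit.
Unset Printing Implicit Defensive.

(* The lexicographic order on {0,1}^n is the order of the binary values
   ("ranks") of the strings, so every query theta_x is a rank threshold.

   Number the leaves of a protocol t by the path reaching
   them: leaf t a b < 2^(depth t).  Each set of inputs reaching one leaf is
   a geometric rectangle, because along the path Alice's and Bob's inputs
   are each confined to an interval by the thresholds met; and the output
   is constant there.  Hence the fibres of leaf t form a monochromatic
   geometric partition with at most 2^(depth t) blocks.

   Given a partition P, let A (resp. B) be the sorted list of
   lower-left Alice (resp. Bob) corners of its rectangles; both have at most
   |P| elements.  The value f(a,b) only depends on the number of corners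
   of A below a and of B below b, and each of these numbers lies in
   [1, |P|], so Alice and Bob each find theirs by a binary search of
   ceil(log2 |P|) threshold queries. *)

Fixpoint val2 (s : seq bool) : nat :=
  if s is x :: s' then x * 2 ^ size s' + val2 s' else 0.

Lemma val2_lt s : val2 s < 2 ^ size s.
Proof. by elim: s => [|x s IH] //=; rewrite expnS; case: x => /=; lia. Qed.

Lemma lexle_val2 s t : size s = size t -> lexle s t = (val2 s <= val2 t).
Proof.
elim: s t => [|x s IH] [|y t] //= [] Hst.
have := val2_lt s; have := val2_lt t; rewrite -Hst (IH _ Hst).
by case: x; case: y => /=; lia.
Qed.

Lemma val2_inj s t : size s = size t -> val2 s = val2 t -> s = t.
Proof.
elim: s t => [|x s IH] [|y t] //= [] Hst.
have := val2_lt s; have := val2_lt t; rewrite -Hst.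
by case: x; case: y => /= H1 H2 E; try lia; rewrite (IH t) //; lia.
Qed.

Definition rank n (a : bits n) : nat := val2 a.

Lemma bleE n (a b : bits n) : ble a b = (rank a <= rank b).
Proof. by rewrite /ble lexle_val2 // !size_tuple. Qed.

Lemma rank_inj n : injective (@rank n).
Proof. by move=> a b /val2_inj E; apply: val_inj; apply: E; rewrite !size_tuple. Qed.

Lemma rank_lt n (a : bits n) : rank a < 2 ^ n.
Proof. by have := val2_lt a; rewrite size_tuple. Qed.

Lemma ble_trans n : transitive (@ble n).
Proof. by move=> b a c; rewrite !bleE; lia. Qed.

Lemma ble_refl n : reflexive (@ble n).
Proof. by move=> a; rewrite bleE. Qed.

Lemma ble_total n : total (@ble n).
Proof. by move=> a b; rewrite !bleE; lia. Qed.

Definition bits0 n : bits n := nseq_tuple n false.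

(* Every query is a rank threshold (QZero is the threshold 2^n). *)
Definition threshold n (q : query n) : nat :=
  if q is QTheta x then rank x else 2 ^ n.

Lemma qevalE n (q : query n) y : qeval q y = (threshold q <= rank y).
Proof.
case: q => [x|] /=; first by rewrite bleE.
by apply/esym/negbTE; rewrite -ltnNge rank_lt.
Qed.

(* The fibres of g contain, with any four of their points, the box spanned
   by their extreme coordinates; i.e. the fibres are geometric rectangles. *)
Definition box_closed n (T : eqType) (g : bits n * bits n -> T) : Prop :=
  forall p1 p2 p3 p4 a b, g p2 = g p1 -> g p3 = g p1 -> g p4 = g p1 ->
    rank p1.1 <= rank a <= rank p2.1 -> rank p3.2 <= rank b <= rank p4.2 ->
    g (a, b) = g p1.

Lemma fibre_partition n (T : eqType) (g : bits n * bits n -> T)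
    (f : bits n -> bits n -> bool) :
  box_closed g -> (forall p p', g p = g p' -> f p.1 p.2 = f p'.1 p'.2) ->
  geom_mono_partition f (preim_partition g [set: bits n * bits n]).
Proof.
move=> conv mono; split; first exact: preim_partitionP.
move=> B /imsetP [x0 _ ->].
have Px0 : g x0 == g x0 by [].
(* The fibre of x0 is the box between its extreme coordinates. *)
pose inB := fun p => g x0 == g p.
case: (@arg_minnP _ x0 inB (fun p => rank p.1) Px0) => p1 /eqP E1 m1.
case: (@arg_maxnP _ x0 inB (fun p => rank p.1) Px0) => p2 /eqP E2 m2.
case: (@arg_minnP _ x0 inB (fun p => rank p.2) Px0) => p3 /eqP E3 m3.
case: (@arg_maxnP _ x0 inB (fun p => rank p.2) Px0) => p4 /eqP E4 m4.
split; last by exists (f x0.1 x0.2) => p; rewrite !inE => /eqP /mono.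
exists p1.1, p2.1, p3.2, p4.2; apply/setP => -[a b]; rewrite !inE !bleE /=.
apply/eqP/idP => [E | /and4P [h1 h2 h3 h4]].
  have Eb : g x0 == g (a, b) by apply/eqP.
  by move: (m1 _ Eb) (m2 _ Eb) (m3 _ Eb) (m4 _ Eb) => /= -> -> -> ->.
by rewrite E1; apply/esym/(conv p1 p2 p3 p4); rewrite -?E1 -?E2 -?E3 -?E4 ?h1 ?h3.
Qed.

Lemma card_fibres n (g : bits n * bits n -> nat) N :
  (forall p, g p < N) -> #|preim_partition g [set: bits n * bits n]| <= N.
Proof.
move=> gN; pose F (i : 'I_N) := [set y in [set: bits n * bits n] | i == g y :> nat].
apply: (@leq_trans #|[set F i | i : 'I_N]|).
  apply: subset_leq_card; apply/subsetP => B /imsetP [x0 _ ->].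
  by apply/imsetP; exists (Ordinal (gN x0)).
by rewrite (leq_trans (leq_imset_card _ _)) // card_ord.
Qed.

Fixpoint leaf n (t : protocol n) (a b : bits n) : nat :=
  match t with
  | PLeaf _ => 0
  | PNode p q t0 t1 =>
      let x := match p with Alice => a | Bob => b end in
      if qeval q x then 2 * leaf t1 a b + 1 else 2 * leaf t0 a b
  end.

Lemma leaf_lt n (t : protocol n) a b : leaf t a b < 2 ^ depth t.
Proof.
elim: t => [o|p q t0 IH0 t1 IH1] //=.
have := leq_maxl (depth t0) (depth t1); have := leq_maxr (depth t0) (depth t1).
rewrite -(leq_exp2l _ _ (isT : 1 < 2)) => H1; rewrite -(leq_exp2l _ _ (isT : 1 < 2)) => H0.
by move: IH0 IH1; rewrite expnS; case: (qeval _ _) => /=; lia.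
Qed.

Lemma leaf_step (c c' : bool) x y x' y' :
  (if c then 2 * x + 1 else 2 * y) = (if c' then 2 * x' + 1 else 2 * y') ->
  c = c' /\ (if c then x = x' else y = y').
Proof. by case: c; case: c' => /= E; try (exfalso; lia); split => //; lia. Qed.

Lemma leaf_run n (t : protocol n) a b a' b' :
  leaf t a b = leaf t a' b' -> run t a b = run t a' b'.
Proof.
elim: t => [o|p q t0 IH0 t1 IH1] //= /leaf_step [-> E].
by move: E; case: (qeval _ _); [apply: IH1 | apply: IH0].
Qed.

Lemma leaf_box_closed n (t : protocol n) :
  box_closed (fun p : bits n * bits n => leaf t p.1 p.2).
Proof.
move=> [a1 b1] [a2 b2] [a3 b3] [a4 b4] a b /=.
elim: t => [o|p q t0 IH0 t1 IH1] //=.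
move=> /leaf_step [E2 H2] /leaf_step [E3 H3] /leaf_step [E4 H4] Ha Hb.
(* A threshold answered alike at the extreme points is answered alike between them. *)
have -> : qeval q (match p with Alice => a | Bob => b end) =
          qeval q (match p with Alice => a1 | Bob => b1 end).
  by clear H2 H3 H4; move: E2 E3 E4; case: p => /=; rewrite !qevalE;
    do 5 (case: leqP => //); lia.
move: H2 H3 H4; rewrite E2 E3 E4.
by case: (qeval _ _) => H2 H3 H4; [rewrite (IH1 H2 H3 H4) | rewrite (IH0 H2 H3 H4)].
Qed.

Lemma partition_of_protocol n (f : bits n -> bits n -> bool) (t : protocol n) :
  computes t f -> exists P, geom_mono_partition f P /\ #|P| <= 2 ^ depth t.
Proof.
move=> Ht; exists (preim_partition (fun p => leaf t p.1 p.2) [set: bits n * bits n]).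
split; last by apply: card_fibres => p; apply: leaf_lt.
apply: fibre_partition; first exact: leaf_box_closed.
by move=> p p' /leaf_run; rewrite !Ht.
Qed.

(* The partition into singletons: chi_geom(f) is well defined. *)
Lemma singleton_partition n (f : bits n -> bits n -> bool) :
  exists P, geom_mono_partition f P.
Proof.
exists (preim_partition id [set: bits n * bits n]).
apply: fibre_partition; last by move=> p p' ->.
move=> p1 p2 p3 p4 a b /= -> -> -> Ha Hb.
have -> : a = p1.1 by apply: rank_inj; lia.
have -> : b = p1.2 by apply: rank_inj; lia.
by case: p1 {Ha Hb}.
Qed.

Lemma partition_card_gt0 n (f : bits n -> bits n -> bool) P :
  geom_mono_partition f P -> 0 < #|P|.
Proof.
move=> [/and3P [/eqP cov _ _] _].
have : (bits0 n, bits0 n) \in cover P by rewrite cov inE.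
by move=> /bigcupP [R PR _]; apply/card_gt0P; exists R.
Qed.

Definition sel n (pl : player) (a b : bits n) : bits n :=
  match pl with Alice => a | Bob => b end.

(* Binary search by player pl: given queries Q m answering "m <= i x" on
   the input x of pl, this tree of depth e locates i x in [lo, lo + 2^e)
   and continues with the protocol cont (i x). *)
Fixpoint search n (pl : player) (Q : nat -> query n) (e lo : nat)
    (cont : nat -> protocol n) : protocol n :=
  match e with
  | 0 => cont lo
  | e'.+1 => let mid := lo + 2 ^ e' in
      PNode pl (Q mid) (search pl Q e' lo cont) (search pl Q e' mid cont)
  end.

Lemma search_run n pl (Q : nat -> query n) (i : bits n -> nat) e lo cont a b :
  (forall m x, 0 < m -> qeval (Q m) x = (m <= i x)) ->
  lo <= i (sel pl a b) < lo + 2 ^ e ->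
  run (search pl Q e lo cont) a b = run (cont (i (sel pl a b))) a b.
Proof.
move=> QE; elim: e lo => [|e IH] lo /= Hr.
  by have -> : i (sel pl a b) = lo by lia.
rewrite -/(sel pl a b) QE; last by have := expn_gt0 2 e; lia.
by case: ifP => H; apply: IH; rewrite expnS in Hr; lia.
Qed.

Lemma search_depth n pl (Q : nat -> query n) e lo cont d :
  (forall i, depth (cont i) <= d) -> depth (search pl Q e lo cont) <= e + d.
Proof.
move=> Hc; elim: e lo => [|e IH] lo //=.
by rewrite addSn ltnS geq_max !IH.
Qed.

(* For a sorted list xs, below xs a is the number of elements of xs that
   are <= a; the m-th smallest element of xs is a threshold query for it. *)
Definition below n (xs : seq (bits n)) (a : bits n) : nat :=
  find (fun x => ~~ ble x a) xs.

Definition nth_query n (xs : seq (bits n)) (m : nat) : query n :=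
  if (0 < m) && (m <= size xs) then QTheta (nth (bits0 n) xs m.-1) else QZero n.

Lemma sorted_ble n (x0 : bits n) (xs : seq (bits n)) i j : sorted (@ble n) xs ->
  i <= j -> j < size xs -> ble (nth x0 xs i) (nth x0 xs j).
Proof.
move=> Hs Hij Hj.
by apply: (sorted_leq_nth (@ble_trans n) (@ble_refl n) _ Hs) => //; rewrite inE; lia.
Qed.

Lemma nth_queryE n (xs : seq (bits n)) m a : sorted (@ble n) xs -> 0 < m ->
  qeval (nth_query xs m) a = (m <= below xs a).
Proof.
rewrite /nth_query /below => Hs Hm; rewrite Hm /=.
case: ifP => Hsz /=; last first.
  by apply/esym/negbTE; rewrite -ltnNge; have := find_size (fun x => ~~ ble x a) xs; lia.
apply/idP/idP => [Hle | Hle].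
  rewrite leqNgt; apply/negP => Hlt.
  have Hhas : has (fun x => ~~ ble x a) xs by rewrite has_find; lia.
  have := nth_find (bits0 n) Hhas => /negP; apply.
  by apply: ble_trans Hle; apply: sorted_ble => //; lia.
by have /(_ ltac:(lia)) /negbFE := @before_find _ (bits0 n) (fun x => ~~ ble x a) xs m.-1.
Qed.

Lemma index_lt_below n (xs : seq (bits n)) p a : sorted (@ble n) xs ->
  p \in xs -> ble p a -> index p xs < below xs a.
Proof.
rewrite /below => Hs pxs pa; rewrite ltnNge; apply/negP => Hle.
have pj : index p xs < size xs by rewrite index_mem.
have Hhas : has (fun x => ~~ ble x a) xs by rewrite has_find; lia.
have := nth_find p Hhas => /negP; apply.
by apply: ble_trans pa; rewrite -{2}(nth_index p pxs); apply: sorted_ble.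
Qed.

Definition anchored n (xs : seq (bits n)) (h : bits n -> bool) : Prop :=
  forall a', exists2 p, p \in xs & ble p a' /\
    forall a, ble p a -> ble a a' -> h a = h a'.

Lemma below_range n (xs : seq (bits n)) h a : sorted (@ble n) xs ->
  anchored xs h -> 0 < below xs a <= size xs.
Proof.
move=> Hs /(_ a) [p pxs [pa _]]; rewrite find_size andbT.
exact: leq_ltn_trans (index_lt_below Hs pxs pa).
Qed.

Lemma below_const n (xs : seq (bits n)) h a a' : sorted (@ble n) xs ->
  anchored xs h -> below xs a = below xs a' -> h a = h a'.
Proof.
move=> Hs Hh.
wlog aa' : a a' / ble a a' => [W E|].
  by case/orP: (ble_total a a') => H; [apply: W | symmetry; apply: W].
move=> E; case: (Hh a') => p pxs [pa' Hp]; apply: Hp => //.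
have := index_lt_below Hs pxs pa'; rewrite -E => /(before_find p).
by rewrite nth_index // => /negbFE.
Qed.

(* If each row of f is anchored by xsA and each column by xsB, and both lists
   have at most 2^e elements, then Alice and Bob successively locate their
   counts by binary search, with a protocol of depth 2e. *)
Lemma protocol_of_anchors n (f : bits n -> bits n -> bool) xsA xsB e :
  sorted (@ble n) xsA -> sorted (@ble n) xsB ->
  size xsA <= 2 ^ e -> size xsB <= 2 ^ e ->
  (forall b, anchored xsA (f^~ b)) -> (forall a, anchored xsB (f a)) ->
  exists t, computes t f /\ depth t <= 2 * e.
Proof.
move=> sA sB zA zB HA HB.
pose repA i := odflt (bits0 n) [pick a | below xsA a == i].
pose repB j := odflt (bits0 n) [pick b | below xsB b == j].
exists (search Alice (nth_query xsA) e 1 (fun i =>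
        search Bob (nth_query xsB) e 1 (fun j => PLeaf n (f (repA i) (repB j))))).
split => [a b|]; last first.
  have leaves i : depth (search Bob (nth_query xsB) e 1 (fun j => PLeaf n (f (repA i) (repB j)))) <= e + 0.
    exact: search_depth.
  by apply: leq_trans (search_depth _ _ _ _ leaves) _; lia.
have QA m x : 0 < m -> qeval (nth_query xsA m) x = (m <= below xsA x).
  exact: nth_queryE.
have QB m x : 0 < m -> qeval (nth_query xsB m) x = (m <= below xsB x).
  exact: nth_queryE.
have rA : 1 <= below xsA a < 1 + 2 ^ e.
  by have := below_range a sA (HA b); lia.
have rB : 1 <= below xsB b < 1 + 2 ^ e.
  by have := below_range b sB (HB a); lia.
rewrite (@search_run _ Alice _ _ e 1 _ a b QA rA).
rewrite (@search_run _ Bob _ _ e 1 _ a b QB rB).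
rewrite /= /repA /repB.
case: pickP => [a1 /eqP Ea1 | /(_ a)]; last by rewrite eqxx.
case: pickP => [b1 /eqP Eb1 | /(_ b)]; last by rewrite eqxx.
by rewrite (below_const sB (HB a1) Eb1); apply: (below_const sA (HA b) Ea1).
Qed.

Definition corner n (R : {set bits n * bits n}) : bits n * bits n :=
  if [pick t : bits n * bits n * bits n * bits n |
        R == geom_rect t.1.1.1 t.1.1.2 t.1.2 t.2] is Some t
  then (t.1.1.1, t.1.2) else (bits0 n, bits0 n).

Lemma cornerP n (R : {set bits n * bits n}) : is_geom_rect R ->
  exists a2 b2, R = geom_rect (corner R).1 a2 (corner R).2 b2.
Proof.
move=> [a1 [a2 [b1 [b2 E]]]]; rewrite /corner.
case: pickP => [t /eqP -> | /(_ (a1, a2, b1, b2))]; first by exists t.1.1.2, t.2.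
by rewrite /= E eqxx.
Qed.

(* In a monochromatic geometric partition, the point (a', b') lies in a
   block whose corner c satisfies c <= (a', b') and f is constant on the
   box [c.1, a'] x [c.2, b'] (it is contained in the block). *)
Lemma partition_corner n (f : bits n -> bits n -> bool) P a' b' :
  geom_mono_partition f P -> exists2 R, R \in P &
    [/\ ble (corner R).1 a', ble (corner R).2 b' &
      forall a b, ble (corner R).1 a -> ble a a' -> ble (corner R).2 b -> ble b b' ->
        f a b = f a' b'].
Proof.
move=> [/and3P [/eqP cov _ _] HP].
have : (a', b') \in cover P by rewrite cov inE.
move=> /bigcupP [R PR Rab]; exists R => //.
have [/cornerP [a2 [b2 ER]] [c Hc]] := HP R PR.
move: (Rab); rewrite {1}ER inE /= => /and4P [h1 h2 h3 h4]; split => // a b ha ha' hb hb'.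
rewrite (Hc _ Rab) (Hc (a, b)) // ER inE /= ha hb.
by rewrite (ble_trans ha' h2) (ble_trans hb' h4).
Qed.

(* A monochromatic geometric partition P yields a protocol of depth
   2 ceil(log2 |P|): the sorted corner coordinates anchor rows and columns. *)
Lemma protocol_of_partition n (f : bits n -> bits n -> bool) P :
  geom_mono_partition f P -> exists t, computes t f /\ depth t <= 2 * up_log 2 #|P|.
Proof.
move=> HP; have HPe := @up_logP 2 #|P| isT.
pose xsA := sort (@ble n) (enum [set (corner R).1 | R in P]).
pose xsB := sort (@ble n) (enum [set (corner R).2 | R in P]).
apply: (@protocol_of_anchors n f xsA xsB).
- exact/sort_sorted/ble_total.
- exact/sort_sorted/ble_total.
- by rewrite size_sort -cardE (leq_trans (leq_imset_card _ _)).
- by rewrite size_sort -cardE (leq_trans (leq_imset_card _ _)).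
- move=> b a'; have [R PR [ca cb Hf]] := partition_corner a' b HP.
  exists (corner R).1; first by rewrite mem_sort mem_enum; apply: imset_f.
  by split => // a ha ha'; apply: Hf => //; apply: ble_refl.
- move=> a b'; have [R PR [ca cb Hf]] := partition_corner a b' HP.
  exists (corner R).2; first by rewrite mem_sort mem_enum; apply: imset_f.
  by split => // b hb hb'; apply: Hf => //; apply: ble_refl.
Qed.

Lemma INR_exp2 c : INR (2 ^ c) = pow 2 c.
Proof. by elim: c => [|c IH] //; rewrite expnS mult_INR IH /=; lra. Qed.

Lemma log2R_le (k c : nat) : 0 < k -> k <= 2 ^ c -> Rle (log2R (INR k)) (INR c).
Proof.
move=> kpos kle.
have ln2 : Rlt 0 (ln 2) by rewrite -ln_1; apply: ln_increasing; lra.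
have k0 : Rlt 0 (INR k) by apply/lt_0_INR/ltP.
have kc : Rle (INR k) (pow 2 c).
  by rewrite -INR_exp2; apply/le_INR/leP.
have : Rle (ln (INR k)) (ln (pow 2 c)).
  case: (Rle_lt_or_eq_dec _ _ kc) => [/(ln_increasing _ _ k0) /Rlt_le // | ->].
  exact: Rle_refl.
rewrite ln_pow; last by lra.
move=> H; rewrite /log2R; apply: (Rmult_le_reg_r (ln 2)) => //.
by rewrite /Rdiv Rmult_assoc Rinv_l; lra.
Qed.

Lemma least_exists (Q : nat -> Prop) :
  (exists m, Q m) -> exists m, Q m /\ forall m', Q m' -> m <= m'.
Proof.
move/(dec_inh_nat_subset_has_unique_least_element Q (fun m => classic (Q m))).
by move=> [m [[Qm Hmin] _]]; exists m; split => // m' /Hmin /leP.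
Qed.

Theorem mainTheorem8 (n : nat) (hn : 1 <= n) (f : bits n -> bits n -> bool) :
  exists k c : nat,
    is_chi_geom f k /\ is_C_comp f c /\
    Rle (log2R (INR k)) (INR c) /\ c <= 2 * up_log 2 k.
Proof.
have [P0 HP0] := singleton_partition f.
have [k [[P [HP <-]] kmin]] :
    exists k, (exists P, geom_mono_partition f P /\ #|P| = k) /\
      forall k', (exists P, geom_mono_partition f P /\ #|P| = k') -> k <= k'.
  by apply: least_exists; exists #|P0|, P0.
have [T [HT HTdepth]] := protocol_of_partition HP.
have [c [[t [Ht <-]] cmin]] :
    exists c, (exists t, computes t f /\ depth t = c) /\
      forall c', (exists t, computes t f /\ depth t = c') -> c <= c'.
  by apply: least_exists; exists (depth T), T.
exists #|P|, (depth t); split; first by split; [exists P | move=> P' HP'; apply: kmin; exists P'].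
split; first by split; [exists t | move=> t' Ht'; apply: cmin; exists t'].
split; last by apply: leq_trans HTdepth; apply: cmin; exists T.
(* Lower bound: the leaves of t give a partition of size <= 2^(depth t). *)
have [P' [HP' HP'size]] := partition_of_protocol Ht.
apply: log2R_le; first exact: partition_card_gt0 HP.
by apply: leq_trans HP'size; apply: kmin; exists P'.
Qed.
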